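(* Over a field of characteristic $0$, write $[a,b]=ab-ba$ and $\{a,b\}=ab+ba$ (so $ab=\tfrac12([a,b]+\{a,b\})$). An algebra is left-symmetric if and only if, in terms of the anticommutative operation $[\cdot,\cdot]$ and the commutative operation $\{\cdot,\cdot\}$, it satisfies \[ [[a,b],c]+[[b,c],a]+[[c,a],b]=0 \] and \[ \{\{a,b\},c\}=-\{[a,b],c\}-2\{[a,c],b\}+[\{a,b\},c]-[[a,c],b]+\{a,\{b,c\}\}-\{a,[b,c]\}+[a,\{b,c\}]. \]
   Context: A left-symmetric algebra is an algebra whose associator $(a,b,c)=(ab)c-a(bc)$ satisfies $(a,b,c)=(b,a,c)$. The statement is the polarization (in the sense of Markl–Remm) of the left-symmetric operad: the defining identities rewritten in the two operations $[\cdot,\cdot]$, $\{\cdot,\cdot\}$. *)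

From HB Require Import structures.
From mathcomp Require Import all_boot all_algebra.
Set Implicit Arguments. Unset Strict Implicit. Unset Printing Implicit Defensive.
Import GRing.Theory.
Local Open Scope ring_scope.

Definition bilinear_mul (K : fieldType) (V : lmodType K) (mul : V -> V -> V) : Prop :=
  [/\ forall a b c, mul (a + b) c = mul a c + mul b c,
      forall a b c, mul a (b + c) = mul a b + mul a c,
      forall (k : K) a b, mul (k *: a) b = k *: mul a b
    & forall (k : K) a b, mul a (k *: b) = k *: mul a b].

Definition associator (K : fieldType) (V : lmodType K) (mul : V -> V -> V) (a b c : V) : V :=
  mul (mul a b) c - mul a (mul b c).

Definition left_symmetric (K : fieldType) (V : lmodType K) (mul : V -> V -> V) : Prop :=
  forall a b c, associator mul a b c = associator mul b a c.

Definition brk (K : fieldType) (V : lmodType K) (mul : V -> V -> V) (a b : V) : V :=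
  mul a b - mul b a.

Definition crl (K : fieldType) (V : lmodType K) (mul : V -> V -> V) (a b : V) : V :=
  mul a b + mul b a.

(* Both identities, and the left-symmetry defect
   D(a,b,c) = (a,b,c) - (b,a,c), are sums of the twelve products of a, b, c
   with distinct letters.  Expanding them shows that the Jacobiator of [.,.]
   is D(a,b,c) - D(a,c,b) + D(b,c,a) and that the difference E(a,b,c) of the
   two sides of the second identity is D(a,b,c) + 3 D(a,c,b) + D(b,c,a), so
   left symmetry implies both identities.  Conversely
   4 D(a,b,c) = - E(a,b,c) + 2 E(a,c,b) + E(b,a,c), so the second identity
   alone gives left symmetry as soon as 2 is invertible. *)

From HB Require Import structures.
From mathcomp Require Import all_boot all_algebra.
Set Implicit Arguments.
Unset Strict Implicit.
Unset Printing Implicit Defensive.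
Import GRing.Theory.
Local Open Scope ring_scope.

(* A decision procedure for identities in an abelian group: both sides are
   reified into terms over a list of atoms and normalised to integer
   coefficient lists. *)
Section ZmodNormalization.
Variable V : zmodType.

Inductive zterm :=
  | ZAtom of nat
  | ZAdd of zterm & zterm
  | ZOpp of zterm
  | ZZero
  | ZMuln of zterm & nat.

Fixpoint zeval (s : seq V) (e : zterm) : V :=
  match e with
  | ZAtom n => nth 0 s n
  | ZAdd e1 e2 => zeval s e1 + zeval s e2
  | ZOpp e1 => - zeval s e1
  | ZZero => 0
  | ZMuln e1 n => zeval s e1 *+ n
  end.

Fixpoint add_coefs (c d : seq int) : seq int :=
  match c, d with
  | [::], _ => d
  | _, [::] => c
  | x :: c', y :: d' => (x + y) :: add_coefs c' d'
  end.

Fixpoint zcoefs (e : zterm) : seq int :=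
  match e with
  | ZAtom n => rcons (nseq n 0) 1
  | ZAdd e1 e2 => add_coefs (zcoefs e1) (zcoefs e2)
  | ZOpp e1 => map -%R (zcoefs e1)
  | ZZero => [::]
  | ZMuln e1 n => map ( *%R^~ n%:Z) (zcoefs e1)
  end.

Fixpoint lincomb (c : seq int) (s : seq V) : V :=
  if c is x :: c' then head 0 s *~ x + lincomb c' (behead s) else 0.

Lemma lincomb_add c d s : lincomb (add_coefs c d) s = lincomb c s + lincomb d s.
Proof.
elim: c d s => [|x c IH] [|y d] s /=; rewrite ?add0r ?addr0 //.
by rewrite IH mulrzDr addrACA.
Qed.

Lemma lincomb_opp c s : lincomb (map -%R c) s = - lincomb c s.
Proof. by elim: c s => [|x c IH] s /=; rewrite ?oppr0 // IH mulrNz opprD. Qed.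

Lemma lincomb_muln c n s : lincomb (map ( *%R^~ n%:Z) c) s = lincomb c s *+ n.
Proof.
elim: c s => [|x c IH] s /=; rewrite ?mul0rn // IH mulrnDl.
by rewrite mulrzA -[n%:Z]natz mulrz_nat.
Qed.

Lemma lincomb_atom n s : lincomb (rcons (nseq n 0) 1) s = nth 0 s n.
Proof.
elim: n s => [|n IH] [|x s] /=; rewrite ?addr0 ?mulr1z ?add0r ?mulr0z ?mul0rz ?IH //.
by case: n {IH}.
Qed.

Lemma zeval_lincomb s e : zeval s e = lincomb (zcoefs e) s.
Proof.
elim: e => [n|e1 IH1 e2 IH2|e1 IH||e1 IH n] /=.
- by rewrite lincomb_atom.
- by rewrite lincomb_add IH1 IH2.
- by rewrite lincomb_opp IH.
- by [].
- by rewrite lincomb_muln IH.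
Qed.

Lemma lincomb_eq0 c s : all (eq_op^~ 0) c -> lincomb c s = 0.
Proof. by elim: c s => [|x c IH] s //= /andP[/eqP-> /IH->]; rewrite mulr0z addr0. Qed.

Lemma zeval_eq s e1 e2 :
  all (eq_op^~ 0) (zcoefs (ZAdd e1 (ZOpp e2))) -> zeval s e1 = zeval s e2.
Proof.
move=> /(lincomb_eq0 s); rewrite -zeval_lincomb /= => /eqP.
by rewrite subr_eq0 => /eqP.
Qed.

End ZmodNormalization.

Ltac zatom_index x s n :=
  lazymatch s with
  | x :: _ => constr:(n)
  | _ :: ?s' => zatom_index x s' (S n)
  end.

Ltac zatoms s t :=
  lazymatch t with
  | @GRing.add _ ?a ?b => let s := zatoms s a in zatoms s b
  | @GRing.opp _ ?a => zatoms s a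
  | @GRing.zero _ => s
  | @GRing.natmul _ ?a _ => zatoms s a
  | _ => match s with
         | _ => let _ := zatom_index t s 0%N in s
         | _ => constr:(t :: s)
         end
  end.

Ltac zreify s t :=
  lazymatch t with
  | @GRing.add _ ?a ?b =>
      let ea := zreify s a in let eb := zreify s b in constr:(ZAdd ea eb)
  | @GRing.opp _ ?a => let ea := zreify s a in constr:(ZOpp ea)
  | @GRing.zero _ => constr:(ZZero)
  | @GRing.natmul _ ?a ?n => let ea := zreify s a in constr:(ZMuln ea n)
  | _ => let n := zatom_index t s 0%N in constr:(ZAtom n)
  end.

Ltac zmodule :=
  lazymatch goal with
  | |- @eq ?T ?l ?r =>
    let s := zatoms (@nil T) l in
    let s := zatoms s r in
    let el := zreify s l in
    let er := zreify s r in
    change (zeval s el = zeval s er); apply: zeval_eq; vm_compute; reflexivity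
  end.

Section Polarization.
Variables (K : fieldType) (V : lmodType K) (mul : V -> V -> V).
Hypothesis mulDl : forall a b c, mul (a + b) c = mul a c + mul b c.
Hypothesis mulDr : forall a b c, mul a (b + c) = mul a b + mul a c.

Local Notation "[ a , b ]" := (brk mul a b).
Local Notation "{ a , b }" := (crl mul a b).

Lemma mulNl a b : mul (- a) b = - mul a b.
Proof.
have mul0l : mul 0 b = 0 by apply: (addrI (mul 0 b)); rewrite -mulDl !addr0.
by apply: (addrI (mul a b)); rewrite -mulDl !subrr mul0l.
Qed.

Lemma mulNr a b : mul a (- b) = - mul a b.
Proof.
have mul0r : mul a 0 = 0 by apply: (addrI (mul a 0)); rewrite -mulDr !addr0.
by apply: (addrI (mul a b)); rewrite -mulDr !subrr mul0r.
Qed.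

Definition lsym_defect a b c := associator mul a b c - associator mul b a c.

Definition polar_defect a b c :=
  {{a, b}, c} -
  (- {[a, b], c} - {[a, c], b} *+ 2 + [{a, b}, c] - [[a, c], b]
   + {a, {b, c}} - {a, [b, c]} + [a, {b, c}]).

Ltac expand_products :=
  rewrite /lsym_defect /polar_defect /associator /brk /crl
          !(mulDl, mulDr, mulNl, mulNr); zmodule.

Lemma jacobi_brk_lsym_defect a b c :
  [[a, b], c] + [[b, c], a] + [[c, a], b] =
  lsym_defect a b c - lsym_defect a c b + lsym_defect b c a.
Proof. by expand_products. Qed.

Lemma polar_defect_lsym_defect a b c :
  polar_defect a b c =
  lsym_defect a b c + lsym_defect a c b *+ 3 + lsym_defect b c a.
Proof. by expand_products. Qed.

Lemma lsym_defect_polar_defect a b c :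
  lsym_defect a b c *+ 4 =
  - polar_defect a b c + polar_defect a c b *+ 2 + polar_defect b a c.
Proof. by expand_products. Qed.

End Polarization.

Theorem mainTheorem12 (K : fieldType) (V : lmodType K) (mul : V -> V -> V)
    (hK : [pchar K] =i pred0) (hmul : bilinear_mul mul) :
  left_symmetric mul <->
  ((forall a b c : V,
      brk mul (brk mul a b) c + brk mul (brk mul b c) a + brk mul (brk mul c a) b = 0)
   /\
   (forall a b c : V,
      crl mul (crl mul a b) c =
        - crl mul (brk mul a b) c
        - (crl mul (brk mul a c) b) *+ 2
        + brk mul (crl mul a b) c
        - brk mul (brk mul a c) b
        + crl mul a (crl mul b c)
        - crl mul a (brk mul b c)
        + brk mul a (crl mul b c))).
Proof.
case: hmul => mulDl mulDr _ _.
split=> [lsym | [_ polar] a b c].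
  have D0 a b c : lsym_defect mul a b c = 0 by rewrite /lsym_defect lsym subrr.
  split=> a b c; first by rewrite jacobi_brk_lsym_defect // !D0 subrr addr0.
  apply/eqP; rewrite -subr_eq0 -/(polar_defect mul a b c).
  by rewrite polar_defect_lsym_defect // !D0 mul0rn !addr0.
have E0 x y z : polar_defect mul x y z = 0 by rewrite /polar_defect polar subrr.
have D4 := lsym_defect_polar_defect mulDl mulDr a b c.
rewrite !E0 oppr0 mul0rn !addr0 -scaler_nat in D4.
move/eqP: D4; rewrite scaler_eq0 (pcharf0P _).1 //= subr_eq0.
by move/eqP.
Qed.
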